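(* Let $H$ be a Hermitian operator on $n$ qubits, $\beta>0$, $\rho_\beta=e^{-\beta H}/\operatorname{tr}(e^{-\beta H})$, and let $O$ be a Hermitian observable with $[H,O]=0$. Then for any parameters $\kappa\ge\|O\|$ ($\kappa>0$), positive integer $m$ and $\gamma>0$, the GQPE measurement channel $\mathcal M$ and the associated map $\widehat{\mathcal M}$ both satisfy $s$-detailed balance with respect to $\rho_\beta$ for every $0\le s\le1$.
   Context: GQPE channel: given $O$, $\kappa$, $m$, $\gamma$, set $N=2^{2m}$, $h=2^{-m}$, $\omega_j=(j-N/2)h$ for $j=0,\dots,N-1$, $\xi_\ell=(\ell-N/2)h$, $\widehat g_\gamma(\xi)=(2\sqrt{2\pi}\gamma)^{1/2}e^{-4\pi^2\gamma^2\xi^2}$, $C=\big(h\sum_{\ell=1}^{N-1}\widehat g_\gamma(\xi_\ell)^2\big)^{1/2}$, $\tilde O=O/\kappa$, and Kraus operators $O_j=\frac{h^{3/2}}{C}\sum_{\ell=1}^{N-1}e^{2\pi i\xi_\ell(\omega_jI-\tilde O)}\widehat g_\gamma(\xi_\ell)$, $j=0,\dots,N-1$, so $\mathcal M(\rho)=\sum_jO_j\rho O_j^\dagger$ (a quantum channel). The outcome attached to index $j$ is $w_j=\kappa Z_j$, where $Z_j=\omega_j$ if $|\omega_j|\le2$ and $Z_j=0$ otherwise. With $\mathbb E_{\rho_\beta}(\mathcal M)=\sum_jw_j\operatorname{tr}(O_j\rho_\beta O_j^\dagger)$, define $\widehat{\mathcal M}(X)=\sum_j(w_j-\mathbb E_{\rho_\beta}(\mathcal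 M))O_jXO_j^\dagger$. For $s\in[0,1]$, $\langle A,B\rangle_s=\operatorname{tr}(A^\dagger\rho_\beta^{1-s}B\rho_\beta^s)$; a linear map $\mathcal T$ satisfies $s$-detailed balance w.r.t. $\rho_\beta$ if $\langle A,\mathcal T^\dagger(B)\rangle_s=\langle\mathcal T^\dagger(A),B\rangle_s$ for all $A,B$, where $\mathcal T^\dagger$ is the Hilbert–Schmidt adjoint. *)

From HB Require Import structures.
From mathcomp Require Import all_boot all_order all_algebra.
From mathcomp Require Import complex.
From mathcomp Require Import all_classical all_reals.
From mathcomp Require Import all_analysis.
Set Implicit Arguments. Unset Strict Implicit. Unset Printing Implicit Defensive.
Import Order.TTheory GRing.Theory Num.Theory.
Local Open Scope ring_scope.
Local Open Scope complex_scope.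

Section GQPE.
Variable R : realType.
Local Notation C := (R[i]).

Definition adj {p q} (A : 'M[C]_(p, q)) : 'M[C]_(q, p) := (map_mx (@Num.conj_op C) A)^T.

Definition is_hermitian {d} (A : 'M[C]_d) : Prop := adj A = A.

Definition vnorm2 {d} (v : 'cV[C]_d) : R := \sum_(i < d) (complex.Re (v i 0) ^+ 2 + complex.Im (v i 0) ^+ 2).
Definition opnorm_le {d} (A : 'M[C]_d) (k : R) : Prop :=
  forall v : 'cV[C]_d, vnorm2 (A *m v) <= k ^+ 2 * vnorm2 v.

(* Functional calculus f(A) for Hermitian A = U^-1 diag(lambda) U (spectral theorem,
   MathComp's spectralmx/spectral_diag); f is applied to the (real) eigenvalues. *)
Definition mxfun {d} (f : R -> C) (A : 'M[C]_d) : 'M[C]_d :=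
  invmx (spectralmx A) *m diag_mx (map_mx (fun z : C => f (complex.Re z)) (spectral_diag A))
    *m spectralmx A.

Definition expi (t : R) : C := (cos t) +i* (sin t).

Definition gibbs {d} (beta : R) (H : 'M[C]_d) : 'M[C]_d :=
  let E := mxfun (fun x => (expR (- beta * x))%:C) H in (\tr E)^-1 *: E.

Definition mxpowR {d} (A : 'M[C]_d) (s : R) : 'M[C]_d := mxfun (fun x => (x `^ s)%:C) A.

Definition sinner {d} (rho : 'M[C]_d) (s : R) (A B : 'M[C]_d) : C :=
  \tr (adj A *m mxpowR rho (1 - s) *m B *m mxpowR rho s).

Definition hs_adjoint {d} (T Tadj : 'M[C]_d -> 'M[C]_d) : Prop :=
  forall A B, \tr (adj A *m T B) = \tr (adj (Tadj A) *m B).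

Definition s_detailed_balance {d} (rho : 'M[C]_d) (s : R) (T : 'M[C]_d -> 'M[C]_d) : Prop :=
  forall Tadj, hs_adjoint T Tadj ->
    forall A B, sinner rho s A (Tadj B) = sinner rho s (Tadj A) B.

Definition gN (m : nat) : nat := 2 ^ (2 * m).
Definition gh (m : nat) : R := (2 ^+ m)^-1.
Definition gomega (m : nat) (j : nat) : R := (j%:R - (gN m)%:R / 2) * gh m.
Definition gxi (m : nat) (l : nat) : R := (l%:R - (gN m)%:R / 2) * gh m.
Definition ghat (gamma xi : R) : R :=
  (2 * Num.sqrt (2 * pi) * gamma) `^ (2^-1) * expR (- (4 * pi ^+ 2 * gamma ^+ 2 * xi ^+ 2)).
Definition gC (m : nat) (gamma : R) : R :=
  Num.sqrt (gh m * \sum_(1 <= l < gN m) ghat gamma (gxi m l) ^+ 2).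

Definition kraus {d} (O : 'M[C]_d) (kappa : R) (m : nat) (gamma : R) (j : nat) : 'M[C]_d :=
  ((gh m `^ (3 / 2) / gC m gamma)%:C) *:
    \sum_(1 <= l < gN m)
      ((ghat gamma (gxi m l))%:C *:
        mxfun (fun x => expi (2 * pi * gxi m l * x)) ((gomega m j)%:C%:M - (kappa^-1)%:C *: O)).

Definition gZ (m : nat) (j : nat) : R := if `|gomega m j| <= 2 then gomega m j else 0.
Definition gw (kappa : R) (m : nat) (j : nat) : R := kappa * gZ m j.

Definition gqpe {d} (O : 'M[C]_d) (kappa : R) (m : nat) (gamma : R) (X : 'M[C]_d) : 'M[C]_d :=
  \sum_(j < gN m) (kraus O kappa m gamma j *m X *m adj (kraus O kappa m gamma j)).

Definition gqpe_mean {d} (rho O : 'M[C]_d) (kappa : R) (m : nat) (gamma : R) : C :=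
  \sum_(j < gN m) ((gw kappa m j)%:C * \tr (kraus O kappa m gamma j *m rho *m adj (kraus O kappa m gamma j))).

Definition gqpe_hat {d} (rho O : 'M[C]_d) (kappa : R) (m : nat) (gamma : R) (X : 'M[C]_d) : 'M[C]_d :=
  \sum_(j < gN m) (((gw kappa m j)%:C - gqpe_mean rho O kappa m gamma) *:
     (kraus O kappa m gamma j *m X *m adj (kraus O kappa m gamma j))).

End GQPE.

From HB Require Import structures.
From mathcomp Require Import all_boot all_order all_algebra.
From mathcomp Require Import complex.
From mathcomp Require Import all_classical all_reals.
From mathcomp Require Import all_analysis.
From mathcomp Require Import lra zify.
Import Order.TTheory GRing.Theory Num.Theory.
Set Implicit Arguments.
Unset Strict Implicit.
Unset Printing Implicit Defensive.
Local Open Scope ring_scope.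

(** Every Kraus operator O_j is a real combination of the unitaries
  exp(2 pi i xi_l (omega_j - O/kappa)); the reflection l |-> N - l of the
  symmetric grid exchanges each term with its adjoint, so O_j is Hermitian.
  Being a function of O, O_j commutes with everything O commutes with, in
  particular with rho_beta (a function of H) and with every power of it.
  Both M and Mhat are then of the form X |-> sum_j c_j O_j X O_j with real
  c_j (for Mhat, c_j = w_j - E(M), real since rho_beta is Hermitian), hence
  Hilbert-Schmidt self-adjoint, and moving O_j around the trace through
  rho^(1-s) and rho^s gives detailed balance for every s. *)

(* (v_i - v_j) B_ij = 0 forces (g v_i - g v_j) B_ij = 0. *)
Lemma diag_mx_comm_map (F : idomainType) n (v : 'rV[F]_n) (g : F -> F) (B : 'M[F]_n) :
  diag_mx v *m B = B *m diag_mx v ->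
  diag_mx (map_mx g v) *m B = B *m diag_mx (map_mx g v).
Proof.
rewrite !mul_diag_mx !mul_mx_diag => /matrixP vB; apply/matrixP => i j.
have /eqP := vB i j; rewrite !mxE [B i j * _]mulrC -subr_eq0 -mulrBl mulf_eq0.
by rewrite subr_eq0 => /orP[/eqP-> | /eqP->]; rewrite ?mulr0 ?mul0r // mulrC.
Qed.

Lemma conjmx_comm (F : fieldType) n (V A B : 'M[F]_n) : V \in unitmx ->
  A *m B = B *m A -> conjmx V A *m conjmx V B = conjmx V B *m conjmx V A.
Proof.
move=> uV AB; rewrite !conjumx // !mulmxA !mulmxKV //.
by rewrite -(mulmxA V A) AB mulmxA.
Qed.

Lemma mxtrace_mul_delta (F : pzRingType) d (Y : 'M[F]_d) i j :
  \tr (Y *m delta_mx i j) = Y j i.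
Proof.
rewrite /mxtrace (bigD1 j) //= big1 ?addr0 => [|k /negbTE nkj]; rewrite mxE.
  rewrite (bigD1 i) //= big1 ?addr0 => [|l /negbTE nli];
  by rewrite mxE ?eqxx ?nli ?mulr1 ?mulr0.
by apply: big1 => l _; rewrite mxE nkj andbF mulr0.
Qed.

Lemma mxtrace_sum (F : pzRingType) d I r (P : pred I) (A : I -> 'M[F]_d) :
  \tr (\sum_(i <- r | P i) A i) = \sum_(i <- r | P i) \tr (A i).
Proof. exact: raddf_sum. Qed.

Section ComplexMatrices.
Variable R : realType.
Local Notation C := R[i].

Lemma conjC_real_complex (x : R) : ((x%:C)%C)^* = (x%:C)%C :> C.
Proof. exact: conjc_real. Qed.

Lemma adj_entry p q (A : 'M[C]_(p, q)) i j : adj A i j = (A j i)^*.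
Proof. by rewrite !mxE. Qed.

Lemma adjK p q (A : 'M[C]_(p, q)) : adj (adj A) = A.
Proof. by apply/matrixP => i j; rewrite !adj_entry conjCK. Qed.

Lemma adjM p q r (A : 'M[C]_(p, q)) (B : 'M[C]_(q, r)) : adj (A *m B) = adj B *m adj A.
Proof. by rewrite /adj map_mxM trmx_mul. Qed.

Lemma adjB p q (A B : 'M[C]_(p, q)) : adj (A - B) = adj A - adj B.
Proof. by rewrite /adj map_mxB linearB. Qed.

Lemma adjZ p q a (A : 'M[C]_(p, q)) : adj (a *: A) = a^* *: adj A.
Proof. by rewrite /adj map_mxZ linearZ. Qed.

Lemma adj_sum p q I r (P : pred I) (F : I -> 'M[C]_(p, q)) :
  adj (\sum_(i <- r | P i) F i) = \sum_(i <- r | P i) adj (F i).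
Proof. by rewrite /adj map_mx_sum raddf_sum. Qed.

Lemma adj_diag d (v : 'rV[C]_d) : adj (diag_mx v) = diag_mx (map_mx (@Num.conj C) v).
Proof. by rewrite /adj map_diag_mx tr_diag_mx. Qed.

Lemma adj_scalar d (a : C) : adj (a%:M : 'M[C]_d) = a^*%:M.
Proof. by rewrite /adj map_scalar_mx tr_scalar_mx. Qed.

Lemma mxtrace_adj d (A : 'M[C]_d) : \tr (adj A) = (\tr A)^*.
Proof. by rewrite mxtrace_tr trace_map_mx. Qed.

Lemma invmx_unitaryE d (P : 'M[C]_d) : P \is unitarymx -> invmx P = adj P.
Proof. by move=> uP; rewrite invmx_unitary // /adj map_trmx. Qed.

Lemma is_hermitian_normalmx d (A : 'M[C]_d) : is_hermitian A -> A \is normalmx.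
Proof. by move=> hA; apply/normalmxP; rewrite -map_trmx -/(adj A) hA. Qed.

Lemma adj_mxtrace_inj d (X Y : 'M[C]_d) :
  (forall B, \tr (adj X *m B) = \tr (adj Y *m B)) -> X = Y.
Proof.
move=> XY; apply/matrixP => i j; apply: (can_inj (@conjCK C)).
by rewrite -!adj_entry -!mxtrace_mul_delta XY.
Qed.

Lemma hs_adjoint_unique d (T T1 T2 : 'M[C]_d -> 'M[C]_d) :
  hs_adjoint T T1 -> hs_adjoint T T2 -> T1 =1 T2.
Proof. by move=> hT1 hT2 A; apply: adj_mxtrace_inj => B; rewrite -hT1 hT2. Qed.

Lemma adj_unitary_similar d (P : 'M[C]_d) (v : 'rV[C]_d) : P \is unitarymx ->
  adj (invmx P *m diag_mx v *m P) = invmx P *m diag_mx (map_mx (@Num.conj C) v) *m P.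
Proof. by move=> uP; rewrite !adjM adj_diag invmx_unitaryE // adjK mulmxA. Qed.

(* No hypothesis on A: spectralmx A is unitary even when A is not normal. *)
Lemma adj_mxfun d (f : R -> C) (A : 'M[C]_d) :
  adj (mxfun f A) = mxfun (fun x => (f x)^*) A.
Proof. by rewrite /mxfun (adj_unitary_similar _ (spectral_unitarymx A)) -map_mx_comp. Qed.

Lemma mxfun_real_hermitian d (f : R -> R) (A : 'M[C]_d) :
  is_hermitian (mxfun (fun x => ((f x)%:C)%C) A).
Proof. by rewrite /is_hermitian adj_mxfun; under eq_fun do rewrite conjC_real_complex. Qed.

Lemma mxfun_comm d (f : R -> C) (A B : 'M[C]_d) : A \is normalmx ->
  A *m B = B *m A -> mxfun f A *m B = B *m mxfun f A.
Proof.
move=> /orthomx_spectralP eA AB; have uP := spectral_unit A.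
have uPV : invmx (spectralmx A) \in unitmx by rewrite unitmx_inv.
have diagA : conjmx (spectralmx A) A = diag_mx (spectral_diag A).
  by rewrite [X in conjmx _ X]eA -conjVmx // conjmxVK.
rewrite /mxfun -conjVmx // -[B](conjmxK B uP); apply: conjmx_comm => //.
by apply: diag_mx_comm_map; rewrite -diagA; exact: conjmx_comm.
Qed.

Definition sandwich d N (c : 'I_N -> C) (K : 'I_N -> 'M[C]_d) (X : 'M[C]_d) :=
  \sum_(j < N) c j *: (K j *m X *m adj (K j)).

Section Sandwich.
Variables (d N : nat) (c : 'I_N -> C) (K : 'I_N -> 'M[C]_d).
Hypotheses (c_real : forall j, (c j)^* = c j) (K_herm : forall j, is_hermitian (K j)).

Lemma adj_sandwich X : adj (sandwich c K X) = sandwich c K (adj X).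
Proof.
rewrite adj_sum; apply: eq_bigr => j _.
by rewrite adjZ c_real !adjM adjK K_herm mulmxA.
Qed.

Lemma sandwich_hs_selfadjoint : hs_adjoint (sandwich c K) (sandwich c K).
Proof.
move=> A B; rewrite adj_sandwich mulmx_suml mulmx_sumr !mxtrace_sum.
apply: eq_bigr => j _; rewrite -scalemxAl -scalemxAr !mxtraceZ K_herm.
by rewrite !mulmxA mxtrace_mulC !mulmxA.
Qed.

Lemma sinner_sandwich rho s A B :
  (forall j t, K j *m mxpowR rho t = mxpowR rho t *m K j) ->
  sinner rho s A (sandwich c K B) = sinner rho s (sandwich c K A) B.
Proof.
move=> K_rho; rewrite /sinner adj_sandwich.
move: (mxpowR rho (1 - s)) (mxpowR rho s) (K_rho ^~ (1 - s)) (K_rho ^~ s).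
move=> P1 P2 KP1 KP2; rewrite mulmx_suml !mulmx_sumr !mulmx_suml !mxtrace_sum.
apply: eq_bigr => j _; rewrite -!scalemxAl -!scalemxAr -!scalemxAl !mxtraceZ.
rewrite K_herm !mulmxA -[in LHS](mulmxA _ P1) -KP1 -[in LHS](mulmxA _ (K j) P2) KP2.
by rewrite !mulmxA [in LHS]mxtrace_mulC !mulmxA.
Qed.

Lemma sandwich_detailed_balance rho s :
  (forall j t, K j *m mxpowR rho t = mxpowR rho t *m K j) ->
  s_detailed_balance rho s (sandwich c K).
Proof.
move=> K_rho Tadj hTadj A B.
by rewrite !(hs_adjoint_unique hTadj sandwich_hs_selfadjoint) sinner_sandwich.
Qed.

End Sandwich.

Lemma expi_conj (t : R) : (expi t)^* = expi (- t).
Proof. by rewrite /expi cosN sinN. Qed.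

Lemma gxi_sym m l : (l <= gN m)%N -> gxi R m (gN m - l) = - gxi R m l.
Proof.
move=> lN; rewrite /gxi natrB // -[RHS]mulNr.
by congr (_ * _); set N := (gN m)%:R; lra.
Qed.

Lemma ghatN (gamma x : R) : ghat gamma (- x) = ghat gamma x.
Proof. by rewrite /ghat sqrrN. Qed.

Lemma kraus_hermitian d (O : 'M[C]_d) kappa m gamma j :
  is_hermitian (kraus O kappa m gamma j).
Proof.
rewrite /is_hermitian /kraus adjZ conjC_real_complex adj_sum; congr (_ *: _).
rewrite [RHS]big_nat_rev; apply: eq_big_nat => l /andP[l_gt0 l_lt].
rewrite adjZ conjC_real_complex adj_mxfun (_ : 1 + gN m - l.+1 = gN m - l)%N; last lia.
rewrite gxi_sym; last exact: ltnW.
rewrite ghatN; congr (_ *: mxfun _ _); apply: funext => x.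
by rewrite expi_conj mulrN mulNr.
Qed.

Lemma kraus_comm d (O G : 'M[C]_d) kappa m gamma j : is_hermitian O ->
  O *m G = G *m O -> kraus O kappa m gamma j *m G = G *m kraus O kappa m gamma j.
Proof.
move=> O_herm OG; rewrite /kraus -scalemxAl -scalemxAr mulmx_suml mulmx_sumr.
congr (_ *: _); apply: eq_bigr => l _; rewrite -scalemxAl -scalemxAr.
congr (_ *: _); apply: mxfun_comm.
  apply: is_hermitian_normalmx.
  by rewrite /is_hermitian adjB adj_scalar adjZ !conjC_real_complex O_herm.
by rewrite mulmxBl mulmxBr scalar_mxC -scalemxAl -scalemxAr OG.
Qed.

Lemma gibbs_hermitian d beta (H : 'M[C]_d) : is_hermitian (gibbs beta H).
Proof.
have E_herm := mxfun_real_hermitian (fun x => expR (- beta * x)) H.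
by rewrite /is_hermitian /gibbs /= adjZ fmorphV /= -mxtrace_adj E_herm.
Qed.

Lemma gibbs_comm d beta (H O : 'M[C]_d) : is_hermitian H ->
  H *m O = O *m H -> gibbs beta H *m O = O *m gibbs beta H.
Proof.
move=> H_herm HO; rewrite /gibbs /= -scalemxAl -scalemxAr mxfun_comm //.
exact: is_hermitian_normalmx.
Qed.

Lemma gqpe_mean_real d (rho O : 'M[C]_d) kappa m gamma : is_hermitian rho ->
  (gqpe_mean rho O kappa m gamma)^* = gqpe_mean rho O kappa m gamma.
Proof.
move=> rho_herm; rewrite /gqpe_mean rmorph_sum; apply: eq_bigr => j _.
by rewrite rmorphM /= conjC_real_complex -mxtrace_adj !adjM adjK rho_herm mulmxA.
Qed.

Lemma gqpeE d (O : 'M[C]_d) kappa m gamma :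
  gqpe O kappa m gamma = sandwich (fun _ => 1) (fun j : 'I_(gN m) => kraus O kappa m gamma j).
Proof. by apply: funext => X; apply: eq_bigr => j _; rewrite scale1r. Qed.

Lemma gqpe_hatE d (rho O : 'M[C]_d) kappa m gamma :
  gqpe_hat rho O kappa m gamma =
  sandwich (fun j : 'I_(gN m) => ((gw kappa m j)%:C)%C - gqpe_mean rho O kappa m gamma)
           (fun j => kraus O kappa m gamma j).
Proof. by []. Qed.

End ComplexMatrices.

Theorem theorem6p2 (R : realType) (n : nat) (H O : 'M[R[i]]_(2 ^ n)) (beta : R)
  (kappa : R) (m : nat) (gamma : R) :
  is_hermitian H -> 0 < beta -> is_hermitian O -> H *m O = O *m H ->
  0 < kappa -> opnorm_le O kappa -> (0 < m)%N -> 0 < gamma ->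
  forall s : R, 0 <= s <= 1 ->
    s_detailed_balance (gibbs beta H) s (gqpe O kappa m gamma) /\
    s_detailed_balance (gibbs beta H) s (gqpe_hat (gibbs beta H) O kappa m gamma).
Proof.
move=> H_herm _ O_herm HO _ _ _ _ s _.
have rho_herm := gibbs_hermitian beta H.
have K_rho (j : 'I_(gN m)) t : kraus O kappa m gamma j *m mxpowR (gibbs beta H) t =
                 mxpowR (gibbs beta H) t *m kraus O kappa m gamma j.
  apply/esym/mxfun_comm; first exact: is_hermitian_normalmx.
  by apply/esym/kraus_comm => //; apply/esym/gibbs_comm.
split.
- rewrite gqpeE; apply: sandwich_detailed_balance K_rho => j.
    exact: conjC1.
  exact: kraus_hermitian.
- rewrite gqpe_hatE; apply: sandwich_detailed_balance K_rho => j.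
    by rewrite rmorphB /= conjC_real_complex gqpe_mean_real.
  exact: kraus_hermitian.
Qed.
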